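(* Let $\{\varphi_n\}_{n\ge1}$ be an orthonormal system on $[0,1]$ and let $\{d_n\}$ be a sequence of real numbers with $d_n=O\!\left(\frac{\sqrt{n}}{\log^2(n+1)}\right)$. For a real sequence $b=\{b_n\}\in \ell_2$ put $$Q_n(d,b,x)=\sum_{k=1}^{n} d_k b_k \log k\,\varphi_k(x),\qquad B_n(d,b)=\max_{1\le i<n}\left|\int_0^{i/n}Q_n(d,b,x)\,dx\right|,\qquad U_n(f)=\int_0^1 f(x)Q_n(d,b,x)\,dx.$$ If for some $b\in\ell_2$ one has $\limsup_{n\to\infty}B_n(d,b)=+\infty$, then there exists a function $g\in A$ such that $\limsup_{n\to\infty}|U_n(g)|=+\infty$.
   Context: $A$ denotes the Banach space of absolutely continuous functions on $[0,1]$ with norm $\|f\|_A=\|f\|_C+\int_0^1|f'(x)|\,dx$, where $\|f\|_C=\max_{x\in[0,1]}|f(x)|$. An orthonormal system on $[0,1]$ is a sequence of functions orthonormal in $L_2(0,1)$. $\log$ denotes the logarithm (so $\log 1=0$). *)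

From HB Require Import structures.
From mathcomp Require Import all_boot all_order all_algebra.
From mathcomp Require Import all_classical all_reals all_analysis.
Set Implicit Arguments. Unset Strict Implicit. Unset Printing Implicit Defensive.
Import Order.TTheory GRing.Theory Num.Theory.
Import numFieldNormedType.Exports.
Local Open Scope classical_set_scope.
Local Open Scope ring_scope.

Section Defs.
Variable R : realType.

(* {phi_n}_{n>=1} orthonormal in L_2(0,1) (index 0 is ignored). *)
Definition orthonormal_system (phi : nat -> R -> R) : Prop :=
  (forall n, (0 < n)%N ->
     measurable_fun `[(0%R:R), 1%R] (phi n) /\
     (@lebesgue_measure R).-integrable `[(0%R:R), 1%R] (fun x => (phi n x ^+ 2)%:E)) /\
  (forall m n, (0 < m)%N -> (0 < n)%N ->
     (\int[@lebesgue_measure R]_(x in `[(0%R:R), 1%R]) (phi m x * phi n x)%:E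
      = (if m == n then 1 else 0)%:E)%E).

(* b in l_2 (index 0 ignored, b_0 plays no role anywhere). *)
Definition in_l2 (b : nat -> R) : Prop := cvgn (series (fun n => b n ^+ 2)).

Definition bigO_sqrt_log2 (d : nat -> R) : Prop :=
  exists C : R, exists N : nat, forall n, (N <= n)%N ->
    `|d n| <= C * (Num.sqrt (n%:R) / (ln (n.+1)%:R) ^+ 2).

Definition abs_cont01 (f : R -> R) : Prop :=
  forall eps : R, 0 < eps -> exists2 delta : R, 0 < delta &
    forall (m : nat) (a b : nat -> R),
      (forall k, (k < m)%N -> 0 <= a k /\ a k <= b k /\ b k <= 1) ->
      (forall k l, (k < l < m)%N -> b k <= a l) ->
      \sum_(k < m) (b k - a k) < delta ->
      \sum_(k < m) `|f (b k) - f (a k)| < eps.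

Definition Qn (d b : nat -> R) (phi : nat -> R -> R) (n : nat) (x : R) : R :=
  \sum_(1 <= k < n.+1) d k * b k * ln (k%:R) * phi k x.

(* B_n(d,b) = max_{1 <= i < n} | int_0^{i/n} Q_n | (= 0 when n <= 1) *)
Definition Bn (d b : nat -> R) (phi : nat -> R -> R) (n : nat) : R :=
  \big[Num.max/0]_(1 <= i < n)
     `| Rintegral (@lebesgue_measure R) `[(0%R:R), i%:R / n%:R] (Qn d b phi n) |.

Definition Un (d b : nat -> R) (phi : nat -> R -> R) (f : R -> R) (n : nat) : R :=
  Rintegral (@lebesgue_measure R) `[(0%R:R), 1%R] (fun x => f x * Qn d b phi n x).

End Defs.

From HB Require Import structures.
From mathcomp Require Import all_boot all_order all_algebra.
From mathcomp Require Import all_classical all_reals all_analysis.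
From mathcomp Require Import ring lra.
Import Order.TTheory GRing.Theory Num.Theory.
Import numFieldNormedType.Exports.
Local Open Scope classical_set_scope.
Local Open Scope ring_scope.
Set Implicit Arguments. Unset Strict Implicit. Unset Printing Implicit Defensive.

(* A gliding hump argument.  The indicator of [0, t] is not in A, but the ramps
   [ramp t c] (of A-norm at most 2) satisfy U_n(ramp t c) -> int_0^t Q_n as c -> oo,
   so unbounded B_n makes the functionals U_n unbounded on a bounded subset of A.
   Choose inductively indices n_k, ramps r_k, signs s_k and scales A_k, where A_k is so
   small that the tail sum_(j > k) A_j r_j moves U_(n_k) by at most A_k <= 1, while r_k is
   chosen after the first k humps with |U_(n_k)(A_k r_k)| > k + 2 and the sign s_k keeps
   U_(n_k) of the partial sum at least that large.  Since A_(k+1) <= A_k / 2, the series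
   g = sum_k s_k A_k r_k converges uniformly with summable variations, so g is absolutely
   continuous, and |U_(n_k)(g)| >= k + 1. *)

Section halving.
Variables (R : realType) (a : nat -> R).
Hypotheses (a_gt0 : forall j, 0 < a j) (a_halving : forall j, a j.+1 <= a j / 2).

Lemma halving_sum_le N M : (N <= M)%N -> \sum_(N <= j < M) a j <= 2 * a N - 2 * a M.
Proof.
move=> /subnKC <-; elim: (M - N)%N => [|p IH]; first by rewrite addn0 big_geq ?subrr.
by rewrite addnS big_nat_recr ?leq_addr //=; have := a_halving (N + p); lra.
Qed.

Lemma halving_small e : 0 < e -> exists J, a J < e.
Proof.
move=> e_gt0; pose J := Num.truncn (a 0%N / e).
have geo j : a j * 2 ^+ j <= a 0%N.
  elim: j => [|j IH]; first by rewrite mulr1.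
  rewrite exprS mulrCA mulrA; apply: le_trans IH; apply: ler_wpM2r; first exact: exprn_ge0.
  by have := a_halving j; lra.
exists J; have : a 0%N / e < J.+1%:R by exact: archimedean.Num.Theory.truncnS_gt.
rewrite ltr_pdivrMr // => /(le_lt_trans (geo J)) lt_J.
have : J.+1%:R * e <= 2 ^+ J * e by rewrite ler_pM2r // -natrX ler_nat ltn_expl.
by move=> /(lt_le_trans lt_J); rewrite mulrC ltr_pM2l ?exprn_gt0.
Qed.

Variable S : R^nat.
Hypothesis S_step : forall j, `|S j.+1 - S j| <= a j.

Lemma halving_steps_dist N M : (N <= M)%N -> `|S M - S N| <= 2 * a N.
Proof.
move=> NM; rewrite -telescope_sumr //; apply: le_trans (ler_norm_sum _ _ _) _.
apply: le_trans (ler_sum _ (fun j _ => S_step j)) _.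
by have := halving_sum_le NM; have := a_gt0 M; lra.
Qed.

Lemma halving_steps_cvg : cvgn S.
Proof.
have a_cvg : cvgn (series a).
  rewrite seriesEnat; apply: nondecreasing_is_cvgn.
    by apply: nondecreasing_series => j _ _; exact: ltW (a_gt0 j).
  exists (2 * a 0%N) => _ [N _ <-] /=.
  by have := halving_sum_le (leq0n N); have := a_gt0 N; lra.
have : cvgn (series (telescope S)).
  apply/normed_cvg/(series_le_cvg _ _ _ a_cvg) => j /=.
  - exact: normr_ge0.
  - exact: ltW (a_gt0 j).
  - exact: S_step.
rewrite telescopeK => cvg_diff.
rewrite (_ : S = fun n => S 0%N + (S n - S 0%N)); last by apply/funext => n; rewrite addrC subrK.
exact: is_cvgD (is_cvg_cst _) cvg_diff.
Qed.

Lemma halving_steps_lim_dist N : `|limn S - S N| <= 2 * a N.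
Proof.
have cvg_dist : (fun M => `|S M - S N|) @ \oo --> `|limn S - S N|.
  by apply: cvg_norm; apply: cvgB halving_steps_cvg (cvg_cst _).
rewrite -(cvg_lim _ cvg_dist) //; apply: limr_le; first by apply/cvg_ex; eexists; exact: cvg_dist.
by near=> M; apply: halving_steps_dist; near: M; exact: nbhs_infty_ge.
Unshelve. all: by end_near.
Qed.

End halving.

Section variation.
Variable R : realType.
Implicit Types (f h : R -> R) (V W : R).

Definition variation01_le f V := forall m (a b : nat -> R),
  (forall k, (k < m)%N -> 0 <= a k /\ a k <= b k /\ b k <= 1) ->
  (forall k l, (k < l < m)%N -> b k <= a l) ->
  \sum_(k < m) `|f (b k) - f (a k)| <= V.

Lemma variation01_le_trans f V W : V <= W -> variation01_le f V -> variation01_le f W.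
Proof. by move=> VW fV m a b ab ba; apply: le_trans (fV m a b ab ba) VW. Qed.

Lemma variation01_leD f h V W : variation01_le f V -> variation01_le h W ->
  variation01_le (f \+ h) (V + W).
Proof.
move=> fV hW m a b ab ba; apply: le_trans (lerD (fV m a b ab ba) (hW m a b ab ba)).
rewrite -big_split /=; apply: ler_sum => k _ /=.
by rewrite opprD addrACA; exact: ler_normD.
Qed.

Lemma variation01_leZ c f V : variation01_le f V ->
  variation01_le (fun x => c * f x) (`|c| * V).
Proof.
move=> fV m a b ab ba; under eq_bigr do rewrite -mulrBr normrM.
by rewrite -mulr_sumr ler_wpM2l // fV.
Qed.

Lemma variation01_le_nonincreasing f : {homo f : x y /~ x <= y} ->
  variation01_le f (f 0 - f 1).
Proof.
move=> f_dec [|m] a b ab ba; first by rewrite big_ord0; have := f_dec 1 0 ler01; lra.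
suff : \sum_(k < m.+1) `|f (b k) - f (a k)| <= f 0 - f (b m).
  by have [_ [_ /f_dec]] := ab m (ltnSn m); lra.
elim: m ab ba => [|m IH] ab ba.
  rewrite big_ord1; have [/f_dec a0 [/f_dec ab0 _]] := ab 0%N isT.
  by rewrite ler0_norm; lra.
rewrite big_ord_recr /=.
have IHm : \sum_(k < m.+1) `|f (b k) - f (a k)| <= f 0 - f (b m).
  apply: IH => [k km|k l /andP[kl lm]]; first by apply: ab; exact: ltnW.
  by apply: ba; rewrite kl ltnW.
have [_ [/f_dec ab_m1 _]] := ab m.+1 (ltnSn _).
have /f_dec ba_m : b m <= a m.+1 by apply: ba; rewrite !ltnSn.
by rewrite ler0_norm; lra.
Qed.

Lemma variation01_le_cvg (F : nat -> R -> R) f V : (forall x, F ^~ x @ \oo --> f x) ->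
  (\forall N \near \oo, variation01_le (F N) V) -> variation01_le f V.
Proof.
move=> F_cvg FV m a b ab ba.
have sum_cvg : (fun N => \sum_(k < m) `|F N (b k) - F N (a k)|) @ \oo -->
    \sum_(k < m) `|f (b k) - f (a k)|.
  apply: (cvg_big (op := +%R) (x0 := 0) (P := xpredT) add_continuous) => // k _.
  by apply: cvg_norm; exact: cvgB.
rewrite -(cvg_lim _ sum_cvg) //; apply: limr_le; first by apply/cvg_ex; eexists; exact: sum_cvg.
by apply: filterS FV => N; apply.
Qed.

Lemma abs_cont01D f h : abs_cont01 f -> abs_cont01 h -> abs_cont01 (f \+ h).
Proof.
move=> f_ac h_ac e e_gt0; have e2_gt0 : 0 < e / 2 by lra.
have [df df_gt0 fdf] := f_ac _ e2_gt0; have [dh dh_gt0 hdh] := h_ac _ e2_gt0.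
exists (Num.min df dh) => [|m a b ab ba]; first by rewrite lt_min df_gt0.
rewrite lt_min => /andP[/(fdf m a b ab ba) fe /(hdh m a b ab ba) he].
apply: le_lt_trans
  (_ : _ <= \sum_(k < m) `|f (b k) - f (a k)| + \sum_(k < m) `|h (b k) - h (a k)|) _.
  rewrite -big_split /=; apply: ler_sum => k _ /=.
  by rewrite opprD addrACA; exact: ler_normD.
lra.
Qed.

Lemma abs_cont01_lipschitz f L : (forall x y, `|f x - f y| <= L * `|x - y|) -> abs_cont01 f.
Proof.
move=> f_lip e e_gt0; have L1_gt0 : 0 < `|L| + 1 by rewrite ltr_wpDl.
exists (e / (`|L| + 1)) => [|m a b ab ba sum_lt]; first exact: divr_gt0.
apply: le_lt_trans (_ : _ <= (`|L| + 1) * \sum_(k < m) (b k - a k)) _.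
  rewrite mulr_sumr; apply: ler_sum => k _; have [_ [abk _]] := ab k (ltn_ord k).
  apply: le_trans (f_lip _ _) _; rewrite ger0_norm ?subr_ge0 //.
  by rewrite ler_wpM2r ?subr_ge0 // (le_trans (ler_norm L)) // lerDl.
by rewrite mulrC -ltr_pdivlMr.
Qed.

Lemma abs_cont01_approx f :
  (forall e, 0 < e -> exists2 h, abs_cont01 h & variation01_le (f \- h) e) -> abs_cont01 f.
Proof.
move=> f_approx e e_gt0; have e3_gt0 : 0 < e / 3 by lra.
have [h h_ac fhV] := f_approx _ e3_gt0; have [d d_gt0 hd] := h_ac _ e3_gt0.
exists d => // m a b ab ba /(hd m a b ab ba) he.
have := fhV m a b ab ba.
suff : \sum_(k < m) `|f (b k) - f (a k)| <=
    \sum_(k < m) `|(f \- h) (b k) - (f \- h) (a k)| + \sum_(k < m) `|h (b k) - h (a k)|.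
  lra.
rewrite -big_split /=; apply: ler_sum => k _ /=.
rewrite [X in `|X| <= _](_ : _ = (f (b k) - h (b k) - (f (a k) - h (a k))) + (h (b k) - h (a k))).
  exact: ler_normD.
lra.
Qed.

End variation.

Section halving_limit.
Variables (R : realType) (a : nat -> R) (F : nat -> R -> R).
Hypotheses (a_gt0 : forall j, 0 < a j) (a_halving : forall j, a j.+1 <= a j / 2).
Hypothesis F_step : forall j x, `|F j.+1 x - F j x| <= a j.

Lemma halving_lim_dist N x : `|limn (F ^~ x) - F N x| <= 2 * a N.
Proof. exact: (halving_steps_lim_dist a_gt0 a_halving (F_step ^~ x)). Qed.

Lemma halving_lim_cvg x : F ^~ x @ \oo --> limn (F ^~ x).
Proof. exact: (halving_steps_cvg a_gt0 a_halving (F_step ^~ x)). Qed.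

Hypothesis F_step_variation : forall j, variation01_le (F j.+1 \- F j) (a j).
Hypothesis F_abs_cont : forall j, abs_cont01 (F j).

Lemma variation01_le_halving J N : (J <= N)%N ->
  variation01_le (F N \- F J) (2 * a J - 2 * a N).
Proof.
move=> /subnKC <-; elim: (N - J)%N => [|p IH].
  by move=> m b c _ _; rewrite addn0 subrr big1 // => k _ /=; rewrite !subrr normr0.
rewrite addnS (_ : F (J + p).+1 \- F J = (F (J + p) \- F J) \+ (F (J + p).+1 \- F (J + p))).
  apply: variation01_le_trans (variation01_leD IH (F_step_variation _)).
  by have := a_halving (J + p); lra.
by apply/funext => x /=; lra.
Qed.

Lemma abs_cont01_halving_lim : abs_cont01 (fun x => limn (F ^~ x)).
Proof.
apply: abs_cont01_approx => e e_gt0.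
have [J aJ_small] : exists J, a J < e / 2 by apply: (halving_small a_halving); lra.
exists (F J) => //; apply: (variation01_le_cvg (F := fun N => F N \- F J)).
  by move=> x /=; apply: cvgB; [exact: halving_lim_cvg | exact: cvg_cst].
near=> N; apply: variation01_le_trans (variation01_le_halving _); last first.
  by near: N; exact: nbhs_infty_ge.
by have := a_gt0 N; lra.
Unshelve. all: by end_near.
Qed.

End halving_limit.

Lemma limn_esup_EFin_eqyP (R : realType) (u : R^nat) :
  limn_esup (fun n => (u n)%:E) = +oo%E <-> forall N (M : R), exists2 n, (N <= n)%N & M < u n.
Proof.
rewrite limn_esup_lim (cvg_lim _ (@cvg_esups_inf R (fun n => (u n)%:E))) // ereal_inf_pinfty.
split=> [esups_y N M | u_large _ [N _ <-]].
  have /= esupsN_y : esups (fun n => (u n)%:E) N = +oo%E by apply: esups_y; exists N.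
  have : (M%:E < +oo)%E by exact: ltry.
  by rewrite -esupsN_y => /ereal_sup_gt[_ [n /= Nn <-]]; rewrite lte_fin; exists n.
apply: eq_infty => r; have [n Nn rn] := u_large N r.
apply: (@le_trans _ _ (u n)%:E); first by rewrite lee_fin ltW.
by apply: ereal_sup_ubound; exists n.
Qed.

Section ramp.
Variable R : realType.
Implicit Types (t c x y u v : R).

Definition clamp01 u := Num.min 1 (Num.max 0 u).

Lemma clamp01E u : clamp01 u = if u <= 0 then 0 else if u <= 1 then u else 1.
Proof.
rewrite /clamp01; case: (leP u 0) => u0 /=; first by case: (leP 1 0) => //; lra.
by case: (leP u 1).
Qed.

Lemma clamp01_itv u : 0 <= clamp01 u <= 1.
Proof. by rewrite clamp01E; case: (leP u 0) => ?; case: (leP u 1) => ? /=; lra. Qed.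

Lemma clamp01_lipschitz u v : `|clamp01 u - clamp01 v| <= `|u - v|.
Proof.
have := ler_norm (u - v); have := ler_norm (v - u); rewrite distrC !clamp01E ler_norml.
by case: (leP u 0) => ?; case: (leP u 1) => ?; case: (leP v 0) => ?; case: (leP v 1) => ?; lra.
Qed.

Lemma clamp01_nondecreasing : {homo clamp01 : u v / u <= v}.
Proof.
move=> u v uv; rewrite !clamp01E.
by case: (leP u 0) => ?; case: (leP u 1) => ?; case: (leP v 0) => ?; case: (leP v 1) => ?; lra.
Qed.

(* An element of A of norm at most 2 approximating the indicator of [0, t]. *)
Definition ramp t c x := clamp01 (1 - (x - t) * c).

Lemma ramp_itv t c x : 0 <= ramp t c x <= 1.
Proof. exact: clamp01_itv. Qed.

Lemma ramp_lipschitz t c x y : 0 <= c -> `|ramp t c x - ramp t c y| <= c * `|x - y|.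
Proof.
move=> c_ge0; apply: le_trans (clamp01_lipschitz _ _) _.
rewrite (_ : 1 - (x - t) * c - (1 - (y - t) * c) = (y - x) * c); last by ring.
by rewrite normrM (ger0_norm c_ge0) distrC mulrC.
Qed.

Lemma ramp_nonincreasing t c : 0 <= c -> {homo ramp t c : x y /~ x <= y}.
Proof.
move=> c_ge0 x y yx; apply: clamp01_nondecreasing.
by rewrite lerB // ler_wpM2r // lerB.
Qed.

Lemma ramp_left t c x : 0 <= c -> x <= t -> ramp t c x = 1.
Proof.
move=> c_ge0 xt; rewrite /ramp clamp01E.
have : (x - t) * c <= 0 by rewrite mulr_le0_ge0 // subr_le0.
move: ((x - t) * c) => p p_le0.
by case: (leP (1 - p) 0) => ?; case: (leP (1 - p) 1) => ?; lra.
Qed.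

Lemma ramp_right t c x : 1 <= (x - t) * c -> ramp t c x = 0.
Proof. by move=> xtc; rewrite /ramp clamp01E subr_le0 xtc. Qed.

Lemma ramp_eventually t x :
  \forall m \near \oo, ramp t m.+1%:R x = if x <= t then 1 else 0.
Proof.
case: leP => xt; first by near=> m; exact: ramp_left.
near=> m; apply: ramp_right; rewrite -ler_pdivrMl ?subr_gt0 // mulr1.
apply: ltW; apply: lt_le_trans (archimedean.Num.Theory.truncnS_gt _) _.
by rewrite ler_nat ltnS; near: m; exact: nbhs_infty_ge.
Unshelve. all: by end_near.
Qed.

Lemma measurable_ramp t c : measurable_fun setT (ramp t c).
Proof.
apply: measurable_realfun.measurable_minr; first exact: measurable_cst.
apply: measurable_realfun.measurable_maxr; first exact: measurable_cst.
apply: measurable_realfun.measurable_funB; first exact: measurable_cst.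
apply: measurable_realfun.measurable_funM; last exact: measurable_cst.
by apply: measurable_realfun.measurable_funB; [exact: measurable_id | exact: measurable_cst].
Qed.

End ramp.

Section kernel_integral.
Variable R : realType.
Local Notation mu := (@lebesgue_measure R).
Local Notation I := (`[(0:R), 1]%classic : set R).
Let mI : measurable I := measurable_itv _.
Let muI : (mu I < +oo)%E.
Proof. by rewrite lebesgue_measure_itv /=; case: ifP => _ //; rewrite oppr0 adde0 ltry. Qed.

Definition bounded_measurable01 (f : R -> R) :=
  measurable_fun I f /\ exists C, forall x, I x -> `|f x| <= C.

Lemma bounded_measurable01_bounded f : bounded_measurable01 f -> [bounded f x | x in I].
Proof.
move=> [_ [C fC]]; exists C; split; first by rewrite num_real.
by move=> M CM x Ix; apply: le_trans (fC x Ix) (ltW CM).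
Qed.

Lemma bounded_measurable01_integrable f : bounded_measurable01 f -> mu.-integrable I (EFin \o f).
Proof.
move=> bf; apply: (@measurable_bounded_integrable _ _ _ mu f I mI muI bf.1).
exact: bounded_measurable01_bounded.
Qed.

Lemma bounded_measurable01D f h : bounded_measurable01 f -> bounded_measurable01 h ->
  bounded_measurable01 (f \+ h).
Proof.
move=> [mf [C fC]] [mh [D hD]]; split; first exact: measurable_realfun.measurable_funD.
by exists (C + D) => x Ix; apply: le_trans (ler_normD _ _) (lerD (fC x Ix) (hD x Ix)).
Qed.

Lemma bounded_measurable01B f h : bounded_measurable01 f -> bounded_measurable01 h ->
  bounded_measurable01 (f \- h).
Proof.
move=> [mf [C fC]] [mh [D hD]]; split; first exact: measurable_realfun.measurable_funB.
by exists (C + D) => x Ix; apply: le_trans (ler_normB _ _) (lerD (fC x Ix) (hD x Ix)).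
Qed.

Lemma bounded_measurable01Z c f : bounded_measurable01 f ->
  bounded_measurable01 (fun x => c * f x).
Proof.
move=> [mf [C fC]]; split; first exact: measurable_realfun.measurable_funM.
by exists (`|c| * C) => x Ix; rewrite normrM ler_wpM2l // fC.
Qed.

Lemma bounded_measurable01_ramp t c : bounded_measurable01 (ramp t c).
Proof.
split; first exact: measurable_funS (measurable_ramp t c).
by exists 1 => x _; have /andP[r0 r1] := ramp_itv t c x; rewrite ger0_norm.
Qed.

Variable Q : R -> R.
Hypothesis Q_int : mu.-integrable I (EFin \o Q).

Lemma integrable_bounded_mul f : bounded_measurable01 f ->
  mu.-integrable I (EFin \o (fun x => f x * Q x)).
Proof.
move=> bf.
have := @integrableMr _ _ _ mu I mI f (EFin \o Q) bf.1 (bounded_measurable01_bounded bf) Q_int.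
by apply: (@eq_integrable _ _ _ mu I mI) => x _; rewrite /= EFinM.
Qed.

Lemma Rintegral_kernelD f h : bounded_measurable01 f -> bounded_measurable01 h ->
  Rintegral mu I (fun x => (f \+ h) x * Q x) =
  Rintegral mu I (fun x => f x * Q x) + Rintegral mu I (fun x => h x * Q x).
Proof.
move=> bf bh; rewrite -RintegralD // ?integrable_bounded_mul //.
by apply: eq_Rintegral => x _; rewrite mulrDl.
Qed.

Lemma Rintegral_kernelZ c f : bounded_measurable01 f ->
  Rintegral mu I (fun x => c * f x * Q x) = c * Rintegral mu I (fun x => f x * Q x).
Proof.
move=> bf; rewrite -RintegralZl ?integrable_bounded_mul //.
by apply: eq_Rintegral => x _; rewrite mulrA.
Qed.

Lemma le_Rintegral_kernel f C : bounded_measurable01 f -> (forall x, I x -> `|f x| <= C) ->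
  `|Rintegral mu I (fun x => f x * Q x)| <= C * Rintegral mu I (fun x => `|Q x|).
Proof.
move=> bf fC.
apply: le_trans (@le_normr_Rintegral _ _ _ mu I _ mI (integrable_bounded_mul bf)) _.
have Q_norm_int := @integrable_norm _ _ _ mu I _ Q_int.
rewrite -(@RintegralZl _ _ _ mu I _ C mI Q_norm_int).
apply: (@le_Rintegral _ _ _ mu I _ _ mI).
- exact: (@integrable_norm _ _ _ mu I _ (integrable_bounded_mul bf)).
- exact: (@integrableZl _ _ _ mu I mI C _ Q_norm_int).
- by move=> x Ix; rewrite normrM ler_wpM2r // fC.
Qed.

Lemma Rintegral_kernel_ramp_approx t eta : t <= 1 -> 0 < eta ->
  exists2 c, 0 < c &
    `|Rintegral mu I (fun x => ramp t c x * Q x) - Rintegral mu `[0, t] Q| < eta.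
Proof.
move=> t_le1 eta_gt0.
have mQ : measurable_fun I Q.
  by apply/measurable_realfun.measurable_EFinP; exact: measurable_int Q_int.
pose It := `[0, t]%classic : set R.
have ItI : It = I `&` It.
  by apply/esym/setIidr => x; rewrite /It /= !in_itv /= => /andP[-> xt]; rewrite (le_trans xt).
have It_int : mu.-integrable It (EFin \o Q).
  apply: (@integrableS _ _ _ mu I It _ mI (measurable_itv _)) Q_int.
  by rewrite ItI; exact: subIsetl.
have ramp_cvg : (\int[mu]_(x in I) (ramp t m.+1%:R x * Q x)%:E)%E @[m --> \oo] -->
    (\int[mu]_(x in It) (Q x)%:E)%E.
  rewrite ItI integral_mkcondr.
  apply: (dominated_cvg _ _ _ _ (integrable_norm Q_int)) => //.
  - move=> m; apply/measurable_realfun.measurable_EFinP.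
    apply: measurable_realfun.measurable_funM => //.
    exact: measurable_funS (measurable_ramp t _).
  - move=> x; rewrite /= in_itv /= => /andP[x_ge0 _]; apply: cvg_near_cst.
    near=> m; rewrite (near (ramp_eventually t x) m) // patchE /It mem_setE /= in_itv /= x_ge0 /=.
    by case: ifP; rewrite ?mul1r ?mul0r.
  - move=> m x _; rewrite /= lee_fin normrM ler_piMl //.
    by have /andP[r0 r1] := ramp_itv t m.+1%:R x; rewrite ger0_norm.
have It_fin := @integrable_fin_num _ _ _ mu It (measurable_itv _) _ It_int.
rewrite -(fineK It_fin) in ramp_cvg.
move/fine_cvgP: ramp_cvg => [_ /cvgrPdist_lt/(_ _ eta_gt0)[N _ close]].
exists N.+1%:R; first exact: ltr0Sn.
by rewrite distrC; exact: (close N (leqnn N)).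
Unshelve. all: by end_near.
Qed.

End kernel_integral.

Section orthonormal_kernel.
Variables (R : realType) (phi : nat -> R -> R).
Hypothesis phi_ons : orthonormal_system phi.
Local Notation mu := (@lebesgue_measure R).
Local Notation I := (`[(0:R), 1]%classic : set R).
Let mI : measurable I := measurable_itv _.

Lemma orthonormal_system_integrable k : (0 < k)%N -> mu.-integrable I (EFin \o phi k).
Proof.
move=> k_gt0; have [mphi phi2_int] := phi_ons.1 k k_gt0.
have one_int : mu.-integrable I (EFin \o cst (1 : R)).
  apply: bounded_measurable01_integrable; split; first exact: measurable_cst.
  by exists 1 => x _; rewrite normr1.
apply: (@le_integrable _ _ _ mu I mI _ (EFin \o (fun x => 1 + phi k x ^+ 2))).
- exact/measurable_realfun.measurable_EFinP.
- move=> x _; rewrite /= lee_fin [X in _ <= X]ger0_norm ?addr_ge0 ?sqr_ge0 //.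
  by rewrite -real_normK ?num_real //; have := normr_ge0 (phi k x); nra.
- pose phi2 x := (phi k x ^+ 2)%:E.
  apply: (@eq_integrable _ _ _ mu I mI ((EFin \o cst 1%R) \+ phi2)%E).
    by move=> x _; rewrite /= EFinD.
  exact: (@integrableD _ _ _ mu I mI _ _ one_int phi2_int).
Qed.

Lemma Qn_integrable d b n : mu.-integrable I (EFin \o Qn d b phi n).
Proof.
pose F k x := ((d k * b k * ln k%:R)%:E * (phi k x)%:E)%E.
apply: (@eq_integrable _ _ _ mu I mI (fun x => \sum_(1 <= k < n.+1 | (1 <= k < n.+1)%N) F k x)).
  move=> x _; rewrite /= /Qn -sumEFin [RHS]big_nat_cond.
  by apply: eq_big => [k | k _]; rewrite ?andbT // EFinM.
apply: (@integrable_sum _ _ _ mu I mI) => k /andP[k_gt0 _].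
exact: (@integrableZl _ _ _ mu I mI) (orthonormal_system_integrable k_gt0).
Qed.

End orthonormal_kernel.

Section align_sign.
Variable R : realDomainType.
Implicit Types x y : R.

Definition align_sign x y : R := if 0 <= x * y then 1 else -1.

Lemma normr_align_sign x y : `|align_sign x y| = 1.
Proof. by rewrite /align_sign; case: ifP; rewrite ?normrN normr1. Qed.

Lemma ler_norm_align_sign x y : `|y| <= `|x + align_sign x y * y|.
Proof.
have normD_ge x' y' : 0 <= x' * y' -> `|y'| <= `|x' + y'|.
  move=> xy_ge0; rewrite -(@ler_pXn2r _ 2) ?nnegrE ?normr_ge0 //.
  by rewrite !real_normK ?num_real //; nra.
rewrite /align_sign; case: ifP => [/normD_ge|]; rewrite ?mul1r // mulN1r.
move=> /negbT; rewrite -ltNge => xy_lt0; rewrite -[`|y|]normrN.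
by apply: normD_ge; rewrite mulrN oppr_ge0 ltW.
Qed.

End align_sign.

Section gliding_hump.
Variables (R : realType) (phi : nat -> R -> R) (d b : nat -> R).
Hypothesis phi_ons : orthonormal_system phi.
Hypothesis Bn_unbounded : forall N (M : R), exists2 n, (N <= n)%N & M < Bn d b phi n.
Local Notation mu := (@lebesgue_measure R).
Local Notation I := (`[(0:R), 1]%classic : set R).
Local Notation Q := (Qn d b phi).
Local Notation U f n := (Un d b phi f n).

Definition Qn_L1 n := Rintegral mu I (fun x => `|Q n x|).

Lemma UnD f h n : bounded_measurable01 f -> bounded_measurable01 h ->
  U (f \+ h) n = U f n + U h n.
Proof. by move=> bf bh; rewrite /Un Rintegral_kernelD //; exact: Qn_integrable. Qed.

Lemma UnZ c f n : bounded_measurable01 f -> U (fun x => c * f x) n = c * U f n.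
Proof. by move=> bf; rewrite /Un Rintegral_kernelZ //; exact: Qn_integrable. Qed.

Lemma le_Un f C n : bounded_measurable01 f -> (forall x, I x -> `|f x| <= C) ->
  `|U f n| <= C * Qn_L1 n.
Proof. by move=> bf fC; apply: le_Rintegral_kernel => //; exact: Qn_integrable. Qed.

Lemma Qn_Rintegral_unbounded N M :
  exists n t, [/\ (N <= n)%N, t <= 1 & M < `|Rintegral mu `[0, t] (Q n)|].
Proof.
have [n Nn] := Bn_unbounded N (Num.max M 0); rewrite ltNge => /negP M_lt.
have [i /andP[_ i_lt_n] M_lt_i] : exists2 i, (1 <= i < n)%N &
    Num.max M 0 < `|Rintegral mu `[0, i%:R / n%:R] (Q n)|.
  apply: contra_notP M_lt => none.
  rewrite /Bn big_seq; apply: bigmax_le => [|i]; first by rewrite le_max lexx orbT.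
  rewrite mem_index_iota leNgt => i_in; apply/negP => M_lt_i; apply: none; exists i => //.
have n_gt0 : (0 < n)%N by apply: leq_ltn_trans i_lt_n.
exists n, (i%:R / n%:R); split=> //; last by apply: le_lt_trans M_lt_i; rewrite le_max lexx.
by rewrite ler_pdivrMr ?ltr0n // mul1r ler_nat ltnW.
Qed.

Lemma exists_ramp_hump N M :
  exists h : nat * R * R, [/\ (N <= h.1.1)%N, 0 < h.2 & M < `|U (ramp h.1.2 h.2) h.1.1|].
Proof.
have [n [t [Nn t_le1 M_lt]]] := Qn_Rintegral_unbounded N (M + 1).
have [c c_gt0 close] := Rintegral_kernel_ramp_approx (Qn_integrable phi_ons d b n) t_le1 ltr01.
exists (n, t, c); split=> //=.
have := ler_normD (Rintegral mu `[0, t] (Q n) - U (ramp t c) n) (U (ramp t c) n).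
by rewrite subrK distrC; lra.
Qed.

Definition hump N M : nat * R * R := projT1 (cid (exists_ramp_hump N M)).

(* The factor [2 (1 + Qn_L1 n_k)] keeps the whole tail after step k from moving
   [U _ n_k] by more than [hump_scale k]. *)
Fixpoint hump_scale k : R :=
  if k is k'.+1 then
    hump_scale k' / (2 * (1 + Qn_L1 (hump k' (k'.+2%:R / hump_scale k')).1.1))
  else 1.

Definition hump_at k := hump k (k.+2%:R / hump_scale k).
Definition hump_index k := (hump_at k).1.1.
Definition hump_ramp k := ramp (hump_at k).1.2 (hump_at k).2.

(* The sign makes the new hump reinforce, rather than cancel, [U _ (hump_index k)]. *)
Fixpoint hump_partial k : R -> R :=
  if k is k'.+1 then
    hump_partial k' \+ (fun x => align_sign (U (hump_partial k') (hump_index k'))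
      (hump_scale k' * U (hump_ramp k') (hump_index k')) * hump_scale k' * hump_ramp k' x)
  else cst 0.

Definition hump_sign k := align_sign (U (hump_partial k) (hump_index k))
  (hump_scale k * U (hump_ramp k) (hump_index k)).

Definition hump_sum x := limn (hump_partial ^~ x).

Lemma hump_index_ge k : (k <= hump_index k)%N.
Proof. by have [] := projT2 (cid (exists_ramp_hump k (k.+2%:R / hump_scale k))). Qed.

Lemma hump_ramp_large k :
  k.+2%:R / hump_scale k < `|U (hump_ramp k) (hump_index k)|.
Proof. by have [] := projT2 (cid (exists_ramp_hump k (k.+2%:R / hump_scale k))). Qed.

Lemma hump_slope_gt0 k : 0 < (hump_at k).2.
Proof. by have [] := projT2 (cid (exists_ramp_hump k (k.+2%:R / hump_scale k))). Qed.

Lemma Qn_L1_ge0 n : 0 <= Qn_L1 n.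
Proof. by apply: Rintegral_ge0 => x _. Qed.

Lemma hump_scaleS k : hump_scale k.+1 * (2 * (1 + Qn_L1 (hump_index k))) = hump_scale k.
Proof. by rewrite /= mulfVK // mulf_neq0 // lt0r_neq0 // ltr_wpDr // Qn_L1_ge0. Qed.

Lemma hump_scale_gt0 k : 0 < hump_scale k.
Proof.
elim: k => [|k IH] /=; first exact: ltr01.
by rewrite divr_gt0 // mulr_gt0 // ltr_wpDr // Qn_L1_ge0.
Qed.

Lemma hump_scale_halving k : hump_scale k.+1 <= hump_scale k / 2.
Proof.
have := hump_scaleS k; have := mulr_ge0 (ltW (hump_scale_gt0 k.+1)) (Qn_L1_ge0 (hump_index k)).
lra.
Qed.

Lemma hump_scale_Qn_L1 k : 2 * hump_scale k.+1 * Qn_L1 (hump_index k) <= hump_scale k.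
Proof. by have := hump_scaleS k; have := hump_scale_gt0 k.+1; lra. Qed.

Lemma hump_scale_le1 k : hump_scale k <= 1.
Proof.
elim: k => [|k IH] //; apply: le_trans (hump_scale_halving k) _.
by have := hump_scale_gt0 k; lra.
Qed.

Lemma hump_ramp_itv k x : 0 <= hump_ramp k x <= 1.
Proof. exact: ramp_itv. Qed.

Lemma hump_partialS k x :
  hump_partial k.+1 x = hump_partial k x + hump_sign k * hump_scale k * hump_ramp k x.
Proof. by []. Qed.

Lemma hump_step k x : `|hump_partial k.+1 x - hump_partial k x| <= hump_scale k.
Proof.
rewrite hump_partialS addrAC subrr add0r !normrM normr_align_sign mul1r.
rewrite gtr0_norm ?hump_scale_gt0 // -[X in _ <= X]mulr1 ler_wpM2l ?(ltW (hump_scale_gt0 k)) //.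
by have /andP[r0 r1] := hump_ramp_itv k x; rewrite ger0_norm.
Qed.

Lemma hump_step_variation k :
  variation01_le (hump_partial k.+1 \- hump_partial k) (hump_scale k).
Proof.
have ramp_var : variation01_le (hump_ramp k) 1.
  apply: variation01_le_trans (variation01_le_nonincreasing _).
    by have /andP[? _] := hump_ramp_itv k 1; have /andP[_ ?] := hump_ramp_itv k 0; lra.
  exact/ramp_nonincreasing/ltW/hump_slope_gt0.
have -> : hump_partial k.+1 \- hump_partial k =
    (fun x => hump_sign k * hump_scale k * hump_ramp k x).
  apply/funext => x; rewrite -[LHS]/(hump_partial k.+1 x - hump_partial k x).
  by rewrite hump_partialS addrAC subrr add0r.
apply: variation01_le_trans (variation01_leZ _ ramp_var).
by rewrite mulr1 normrM normr_align_sign mul1r gtr0_norm ?hump_scale_gt0.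
Qed.

Lemma abs_cont01_hump_partial k : abs_cont01 (hump_partial k).
Proof.
elim: k => [|k IH] /=.
  by apply: (@abs_cont01_lipschitz _ _ 0) => x y; rewrite subrr normr0 mul0r.
apply: abs_cont01D IH _; apply: (@abs_cont01_lipschitz _ _ (hump_scale k * (hump_at k).2)).
move=> x y; rewrite -mulrBr !normrM normr_align_sign mul1r gtr0_norm ?hump_scale_gt0 //.
rewrite -mulrA ler_wpM2l ?(ltW (hump_scale_gt0 k)) //.
exact/ramp_lipschitz/ltW/hump_slope_gt0.
Qed.

Lemma bounded_measurable01_hump_partial k : bounded_measurable01 (hump_partial k).
Proof.
elim: k => [|k IH] /=.
  by split; [exact: measurable_cst | exists 0 => x _; rewrite normr0].
by apply: bounded_measurable01D IH (bounded_measurable01Z _ (bounded_measurable01_ramp _ _)).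
Qed.

Lemma abs_cont01_hump_sum : abs_cont01 hump_sum.
Proof.
apply: (abs_cont01_halving_lim hump_scale_gt0 hump_scale_halving).
- exact: hump_step.
- exact: hump_step_variation.
- exact: abs_cont01_hump_partial.
Qed.

Lemma hump_sum_dist k x : `|hump_sum x - hump_partial k x| <= 2 * hump_scale k.
Proof. exact: (halving_lim_dist hump_scale_gt0 hump_scale_halving hump_step). Qed.

Lemma bounded_measurable01_hump_sum : bounded_measurable01 hump_sum.
Proof.
split.
  apply: (measurable_realfun.measurable_fun_cvg (h := hump_partial)).
    by move=> k; exact: (bounded_measurable01_hump_partial k).1.
  by move=> x _; exact: (halving_lim_cvg hump_scale_gt0 hump_scale_halving hump_step).
by exists 2 => x _; have := hump_sum_dist 0 x; rewrite /= subr0 mulr1.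
Qed.

Lemma Un_hump_sum_large k : k.+1%:R <= `|U hump_sum (hump_index k)|.
Proof.
set n := hump_index k; set P := hump_partial k.+1.
have bP : bounded_measurable01 P by exact: bounded_measurable01_hump_partial.
have bD := bounded_measurable01B bounded_measurable01_hump_sum bP.
have P_large : k.+2%:R <= `|U P n|.
  have b_ramp : bounded_measurable01 (hump_ramp k) by exact: bounded_measurable01_ramp.
  rewrite /P /= UnD; last 2 first.
  - exact: bounded_measurable01_hump_partial.
  - exact: bounded_measurable01Z.
  rewrite UnZ // -/n.
  have := ler_norm_align_sign (U (hump_partial k) n) (hump_scale k * U (hump_ramp k) n).
  rewrite mulrA; apply: le_trans; rewrite normrM gtr0_norm ?hump_scale_gt0 //.
  by rewrite -ler_pdivrMl ?hump_scale_gt0 // mulrC ltW // hump_ramp_large.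
have rest_small : `|U (hump_sum \- P) n| <= 1.
  apply: le_trans (le_Un n bD (fun x _ => hump_sum_dist k.+1 x)) _.
  exact: le_trans (hump_scale_Qn_L1 k) (hump_scale_le1 k).
have -> : U hump_sum n = U P n + U (hump_sum \- P) n.
  by rewrite -UnD //; congr (U _ n); apply/funext => x /=; rewrite addrC subrK.
have := ler_normD (U P n + U (hump_sum \- P) n) (- U (hump_sum \- P) n); rewrite addrK normrN.
by rewrite -[k.+2]addn1 natrD in P_large; lra.
Qed.

End gliding_hump.

Unset Implicit Arguments.

Theorem theorem2 (R : realType) (phi : nat -> R -> R) (d : nat -> R) :
  orthonormal_system phi ->
  bigO_sqrt_log2 d ->
  forall b : nat -> R, in_l2 b ->
  limn_esup (fun n => (Bn d b phi n)%:E) = +oo%E ->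
  exists g : R -> R, abs_cont01 g /\
    limn_esup (fun n => (`| Un d b phi g n |)%:E) = +oo%E.
Proof.
move=> phi_ons _ b _ /limn_esup_EFin_eqyP Bn_unbounded.
exists (hump_sum phi_ons Bn_unbounded); split; first exact: abs_cont01_hump_sum.
apply/limn_esup_EFin_eqyP => N M; pose k := (N + Num.truncn `|M|)%N.
exists (hump_index phi_ons Bn_unbounded k).
  exact: leq_trans (leq_addr _ _) (hump_index_ge _ _ k).
apply: lt_le_trans (Un_hump_sum_large phi_ons Bn_unbounded k).
apply: le_lt_trans (ler_norm M) _; apply: lt_le_trans (archimedean.Num.Theory.truncnS_gt _) _.
by rewrite ler_nat ltnS leq_addl.
Qed.
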